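(* Let $n\ge 9$ and let $T^*$ be a chemical tree on $n$ vertices with maximum degree $\Delta(T^* )=4$. Let $\Phi(n)$ be the set of chemical trees $T$ on $n$ vertices having exactly one vertex of degree $4$, $n-5$ vertices of degree $2$, $4$ vertices of degree $1$ (and none of degree $3$), with $m_{1,2}(T)=m_{2,4}(T)=4$, $m_{1,4}(T)=0$ and $m_{2,2}(T)=n-9$. If $T^*\notin\Phi(n)$, then there exists $T\in\Phi(n)$ such that $SO(T)<SO(T^* )$ and $SO_{red}(T)<SO_{red}(T^* )$.
   Context: A chemical tree is a tree with maximum degree at most $4$. $d_G(u)$ is the degree of $u$ and $m_{i,j}(G)$ is the number of edges joining a vertex of degree $i$ to a vertex of degree $j$. $SO(G)=\sum_{uv\in E(G)}\sqrt{d_G(u)^2+d_G(v)^2}$ and $SO_{red}(G)=\sum_{uv\in E(G)}\sqrt{(d_G(u)-1)^2+(d_G(v)-1)^2}$. *)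

From mathcomp Require Import all_boot all_order all_algebra.
Set Implicit Arguments. Unset Strict Implicit. Unset Printing Implicit Defensive.
Import Order.TTheory GRing.Theory Num.Theory.
Local Open Scope ring_scope.

Definition simple_graph (n : nat) (e : rel 'I_n) : Prop :=
  symmetric e /\ irreflexive e.

Definition deg (n : nat) (e : rel 'I_n) (x : 'I_n) : nat := #|[set y | e x y]|.

Definition edges (n : nat) (e : rel 'I_n) : {set 'I_n * 'I_n} :=
  [set p : 'I_n * 'I_n | (p.1 < p.2)%N && e p.1 p.2].

Definition is_tree (n : nat) (e : rel 'I_n) : Prop :=
  simple_graph e /\ (forall x y : 'I_n, connect e x y) /\ #|edges e| = n.-1.

Definition chemical_tree (n : nat) (e : rel 'I_n) : Prop :=
  is_tree e /\ forall x : 'I_n, (deg e x <= 4)%N.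

Definition max_deg (n : nat) (e : rel 'I_n) : nat := \max_(x : 'I_n) deg e x.

Definition nverts (n : nat) (e : rel 'I_n) (i : nat) : nat :=
  #|[set x | deg e x == i]|.

Definition medges (n : nat) (e : rel 'I_n) (i j : nat) : nat :=
  #|[set p in edges e | ((deg e p.1 == i) && (deg e p.2 == j))
                      || ((deg e p.1 == j) && (deg e p.2 == i))]|.

Definition SO (R : rcfType) (n : nat) (e : rel 'I_n) : R :=
  \sum_(p in edges e) Num.sqrt ((deg e p.1)%:R ^+ 2 + (deg e p.2)%:R ^+ 2).

Definition SOred (R : rcfType) (n : nat) (e : rel 'I_n) : R :=
  \sum_(p in edges e)
     Num.sqrt (((deg e p.1)%:R - 1) ^+ 2 + ((deg e p.2)%:R - 1) ^+ 2).

Definition inPhi (n : nat) (e : rel 'I_n) : Prop :=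
  chemical_tree e /\
  [/\ nverts e 4 = 1%N, nverts e 2 = (n - 5)%N, nverts e 1 = 4%N
     & nverts e 3 = 0%N] /\
  [/\ medges e 1 2 = 4%N, medges e 2 4 = 4%N, medges e 1 4 = 0%N
     & medges e 2 2 = (n - 9)%N].

(* Write the index as a sum over edges of f(d_u, d_v) and pick vertex potentials w so that
   slack(a, b) = f(a, b) - w(a) - w(b) vanishes on the edge types 12, 22, 24 of Phi(n) and is
   nonnegative on the others except 44.  Since the degrees sum to 2(n - 1), the index equals
   mu n - 2 lam + sum_v H(d_v) + sum_uv slack(d_u, d_v), where the defect
   H(d) = d w(d) - lam (d - 2) - mu vanishes at d = 1, 2 and is positive at d = 0, 3, 4.
   The trees of Phi(n) have excess exactly H(4); a chemical tree with a vertex of degree 4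
   outside Phi(n) has a second hub (whose defect outweighs the negative 44-slacks), or a vertex
   of degree 0 or 3, or a leaf next to the hub, each of which adds a positive term.  Suitable
   potentials exist for both SO and SO_red, and a spider with four legs of length >= 2 is a
   tree of Phi(n). *)

From mathcomp Require Import all_boot all_order all_algebra.
From mathcomp Require Import ring lra zify.
Set Implicit Arguments. Unset Strict Implicit. Unset Printing Implicit Defensive.
Import Order.TTheory GRing.Theory Num.Theory.

Lemma muln_eq (a b : nat) : a * (a == b) = b * (a == b).
Proof. by case: eqP => [->|]; rewrite ?muln0. Qed.

Lemma sum_eq_ord k d (g : nat -> nat) : d < k -> \sum_(j < k) (d == j) * g j = g d.
Proof.
move=> dk; rewrite (bigD1 (Ordinal dk)) //= eqxx mul1n big1 ?addn0 // => j.
by rewrite -(inj_eq val_inj) /= eq_sym => /negbTE ->.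
Qed.

Definition adj_pairs n (e : rel 'I_n) (i j : nat) : nat :=
  \sum_x \sum_(y | e x y) ((deg e x == i) && (deg e y == j)).

Section Counting.
Variables (n : nat) (e : rel 'I_n).
Hypotheses (e_sym : symmetric e) (e_irr : irreflexive e).

Lemma big_adj_edges (V : Type) (idx : V) (op : Monoid.com_law idx)
    (F : 'I_n -> 'I_n -> V) :
  \big[op/idx]_x \big[op/idx]_(y | e x y) F x y =
  \big[op/idx]_(p in edges e) op (F p.1 p.2) (F p.2 p.1).
Proof.
have swapK : involutive (fun p : 'I_n * 'I_n => (p.2, p.1)) by case.
rewrite pair_big_dep (bigID (fun p : 'I_n * 'I_n => p.1 < p.2)) big_split /=.
congr (op _ _); first by apply: eq_bigl => p; rewrite inE andbC.
rewrite (reindex_inj (inv_inj swapK)) /=; apply: eq_bigl => -[x y] /=.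
rewrite inE /= e_sym -leqNgt leq_eqVlt andb_orr.
by case: (eqVneq (x : nat) y) => [/val_inj ->|_]; rewrite ?e_irr ?ltnn ?andbF // andbC.
Qed.

Lemma sum_deg : \sum_x deg e x = (#|edges e|).*2.
Proof.
rewrite -addnn -sum1_card -big_split /= -(big_adj_edges _ (fun _ _ => 1)).
by apply: eq_bigr => x _; rewrite sum1dep_card.
Qed.

Lemma nverts_sum i : nverts e i = \sum_x (deg e x == i).
Proof. by rewrite /nverts -sum1dep_card big_mkcond. Qed.

Lemma card_edges_cond (P : pred ('I_n * 'I_n)) :
  #|[set p in edges e | P p]| = \sum_(p in edges e) P p.
Proof.
rewrite -sum1_card (eq_bigl (fun p => (p \in edges e) && P p)) => [|p]; last by rewrite inE.
by rewrite big_mkcondr; apply: eq_bigr => p _; case: (P p).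
Qed.

Lemma adj_pairsC i j : adj_pairs e i j = adj_pairs e j i.
Proof.
rewrite /adj_pairs !big_adj_edges; apply: eq_bigr => p _ /=.
by rewrite addnC; congr (_ + _); congr nat_of_bool; apply: andbC.
Qed.

Lemma medges_adj_pairs i j : i != j -> medges e i j = adj_pairs e i j.
Proof.
move=> ij; rewrite /medges card_edges_cond /adj_pairs big_adj_edges.
apply: eq_bigr => p _ /=; rewrite [in RHS]andbC.
case: (eqVneq (deg e p.1) i) => [->|_]; first by rewrite (negbTE ij) !andbF andbT orbF addn0.
by rewrite andbF /= andbC.
Qed.

Lemma medges_adj_pairs_diag i : (medges e i i).*2 = adj_pairs e i i.
Proof.
rewrite /medges card_edges_cond /adj_pairs big_adj_edges -addnn -big_split.
by apply: eq_bigr => p _ /=; rewrite orbb; congr (_ + _); congr nat_of_bool; apply: andbC.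
Qed.

Lemma sum_adj_const x c : \sum_(y | e x y) c = deg e x * c.
Proof. by rewrite /deg -sum1dep_card big_distrl; apply: eq_bigr => y _ /=; rewrite mul1n. Qed.

Lemma adj_pairs_le i j : adj_pairs e i j <= i * nverts e i.
Proof.
rewrite nverts_sum big_distrr /=; apply: leq_sum => x _.
apply: (@leq_trans (\sum_(y | e x y) (deg e x == i))).
  by apply: leq_sum => y _; case: (deg e x == i); case: (deg e y == j).
by rewrite sum_adj_const muln_eq.
Qed.

Lemma adj_pairs_full i j :
  (forall x y, e x y -> deg e x = i -> deg e y = j) -> adj_pairs e i j = i * nverts e i.
Proof.
move=> nbr; rewrite nverts_sum big_distrr /=; apply: eq_bigr => x _.
have [dx|_] := eqVneq (deg e x) i; last by rewrite muln0 big1.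
rewrite muln1 -dx -[RHS]muln1 -sum_adj_const.
by apply: eq_bigr => y xy; rewrite (nbr x y xy dx) eqxx.
Qed.

Lemma adj_pairs_eq0 i j :
  (forall x y, e x y -> deg e x = i -> deg e y != j) -> adj_pairs e i j = 0.
Proof.
move=> nbr; apply: big1 => x _; apply: big1 => y xy.
have [dx|//] := eqVneq (deg e x) i.
by rewrite (negbTE (nbr x y xy dx)).
Qed.

Section DegreeBound.
Variable k : nat.
Hypothesis deg_lt : forall x, deg e x < k.

Lemma sum_nverts : \sum_(i < k) nverts e i = n.
Proof.
under eq_bigr do rewrite nverts_sum.
rewrite exchange_big /= -[RHS]card_ord -sum1_card.
apply: eq_bigr => x _; rewrite -(sum_eq_ord (fun=> 1) (deg_lt x)).
by apply: eq_bigr => i _; rewrite muln1.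
Qed.

Lemma sum_mul_nverts : \sum_(i < k) i * nverts e i = (#|edges e|).*2.
Proof.
under eq_bigr do rewrite nverts_sum big_distrr.
rewrite -sum_deg exchange_big /=; apply: eq_bigr => x _.
by rewrite -[RHS](sum_eq_ord id (deg_lt x)); apply: eq_bigr => i _; rewrite mulnC.
Qed.

Lemma sum_adj_pairs i : \sum_(j < k) adj_pairs e i j = i * nverts e i.
Proof.
rewrite exchange_big nverts_sum big_distrr; apply: eq_bigr => x _ /=.
rewrite exchange_big /= (eq_bigr (fun=> (deg e x == i : nat))) => [|y _].
  by rewrite sum_adj_const muln_eq.
rewrite -[RHS](sum_eq_ord (fun=> deg e x == i) (deg_lt y)).
by apply: eq_bigr => j _; rewrite mulnb andbC.
Qed.

End DegreeBound.

Lemma deg_gt0 x y : e x y -> 0 < deg e x.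
Proof. by move=> xy; apply/card_gt0P; exists y; rewrite inE. Qed.

Lemma leaf_nbr x y z : deg e x = 1 -> e x y -> e x z -> z = y.
Proof.
move=> /eqP/cards1P[a Ha] xy xz.
by move: (xy) (xz); rewrite -!(in_set (e x)) Ha !inE => /eqP -> /eqP ->.
Qed.

Lemma leaf_nbr_not_leaf x y : (forall u v, connect e u v) -> 2 < n ->
  e x y -> deg e x = 1 -> deg e y != 1.
Proof.
move=> conn n_gt2 xy dx; apply/eqP => dy.
have yx : e y x by rewrite e_sym.
have pair_closed : closed e (mem [:: x; y]).
  move=> u v; rewrite !inE.
  have [-> xv | ux] := eqVneq u x; first by rewrite (leaf_nbr dx xv xy) eqxx orbT.
  have [-> yv | uy uv] := eqVneq u y; first by rewrite (leaf_nbr dy yv yx) eqxx.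
  apply/esym/negbTE; rewrite negb_or.
  apply/andP; split; apply/eqP => v_eq; move: uv; rewrite e_sym v_eq.
    by move=> /(leaf_nbr dx)/(_ xy)/eqP; rewrite eq_sym (negbTE uy).
  by move=> /(leaf_nbr dy)/(_ yx)/eqP; rewrite eq_sym (negbTE ux).
have : #|'I_n| <= size [:: x; y].
  apply: leq_trans (card_size _); apply: subset_leq_card; apply/subsetP => v _.
  by rewrite -(closed_connect pair_closed (conn x v)) mem_head.
by rewrite card_ord leqNgt n_gt2.
Qed.

Lemma adj_edge x y : e x y -> ((x, y) \in edges e) || ((y, x) \in edges e).
Proof.
move=> xy; rewrite !inE /= [e y x]e_sym xy !andbT.
case: (ltngtP x y) => // /val_inj xy_eq.
by move: xy; rewrite xy_eq e_irr.
Qed.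

End Counting.

(* The trees of Phi(n) are the spiders centred at x with four legs of length at least 2. *)
Definition phi_shape n (e : rel 'I_n) (x : 'I_n) : Prop :=
  [/\ deg e x = 4, forall y, y != x -> deg e y = 1 \/ deg e y = 2
    & forall y z, e y z -> deg e y = 1 -> deg e z = 2].

Section PhiShape.
Variables (n : nat) (e : rel 'I_n) (x : 'I_n).
Hypotheses (e_chem : chemical_tree e) (e_phi : phi_shape e x).

Let e_sym : symmetric e. Proof. by case: e_chem => -[[]]. Qed.
Let e_irr : irreflexive e. Proof. by case: e_chem => -[[]]. Qed.

Lemma phi_deg y : [\/ y = x, deg e y = 1 | deg e y = 2].
Proof.
have [->|yx] := eqVneq y x; first exact: Or31.
by case: e_phi => _ /(_ y yx) [] d _; [apply: Or32 | apply: Or33].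
Qed.

Lemma phi_deg4 y : (deg e y == 4) = (y == x).
Proof.
case: e_phi => dx _ _; have [->|yx] := eqVneq y x; first by rewrite dx.
by case: (phi_deg y) => [/eqP|->|->]; rewrite ?(negbTE yx).
Qed.

Lemma phi_nverts_eq0 i : i \notin [:: 1; 2; 4] -> nverts e i = 0.
Proof.
move=> i_out; apply/eqP; rewrite cards_eq0; apply/eqP/setP => y; rewrite !inE.
apply/negbTE; apply: contra i_out => /eqP <-.
by case: e_phi => dx _ _; case: (phi_deg y) => [->|->|->]; rewrite ?dx.
Qed.

Lemma phi_nverts4 : nverts e 4 = 1.
Proof.
rewrite /nverts (_ : [set y | _] = [set x]) ?cards1 //.
by apply/setP => y; rewrite !inE phi_deg4.
Qed.

Lemma phi_hub_nbr y : e x y -> deg e y = 2.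
Proof.
move=> xy; case: e_phi => dx _ leaf; case: (phi_deg y) => [yx|dy|//].
  by move: xy; rewrite yx e_irr.
by move: (leaf y x); rewrite e_sym dx => /(_ xy dy).
Qed.

Lemma phi_nverts : nverts e 1 = 4 /\ nverts e 2 = n - 5.
Proof.
have deg_lt5 y : deg e y < 5 by case: e_chem => _ /(_ y).
have := sum_nverts deg_lt5; have := sum_mul_nverts e_sym e_irr deg_lt5.
case: e_chem => -[_ [_ ->]] _.
rewrite -(big_mkord xpredT (fun i => i * nverts e i)) -(big_mkord xpredT (nverts e)).
rewrite /index_iota /= !big_cons !big_nil /=.
rewrite (@phi_nverts_eq0 0) ?(@phi_nverts_eq0 3) // phi_nverts4.
by move=> *; lia.
Qed.

Lemma phi_shape_inPhi : inPhi e.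
Proof.
have [dx _ leaf_adj] := e_phi; have [N1 N2] := phi_nverts.
have deg_lt5 y : deg e y < 5 by case: e_chem => _ /(_ y).
have m12 : adj_pairs e 1 2 = 4 by rewrite adj_pairs_full ?N1.
have m42 : adj_pairs e 4 2 = 4.
  rewrite adj_pairs_full ?phi_nverts4 // => y z yz /eqP.
  by rewrite phi_deg4 => /eqP yx; apply: phi_hub_nbr; rewrite -yx.
have m14 : adj_pairs e 1 4 = 0 by apply: adj_pairs_eq0 => y z yz /(leaf_adj y z yz) ->.
have m20 : adj_pairs e 2 0 = 0.
  by apply: adj_pairs_eq0 => y z yz _; rewrite -lt0n (@deg_gt0 _ _ z y) // e_sym.
have m23 : adj_pairs e 2 3 = 0.
  by apply: adj_pairs_eq0 => y z _ _; case: (phi_deg z) => [->|->|->]; rewrite ?dx.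
have := sum_adj_pairs deg_lt5 2.
rewrite -(big_mkord xpredT (adj_pairs e 2)) /index_iota /= !big_cons !big_nil.
rewrite m20 m23 adj_pairsC // m12 adj_pairsC // m42 -medges_adj_pairs_diag // N2 => m22.
split=> //; split; split; rewrite ?phi_nverts4 ?N1 ?N2 ?phi_nverts_eq0 //.
- by rewrite medges_adj_pairs.
- by rewrite medges_adj_pairs // adj_pairsC.
- by rewrite medges_adj_pairs.
- lia.
Qed.

End PhiShape.

Lemma card_ord_pred n (P : pred nat) : #|[set y : 'I_n | P y]| = count P (iota 0 n).
Proof.
rewrite -val_enum_ord count_map cardE /enum_mem size_filter.
by rewrite (@eq_filter _ _ predT) // filter_predT; apply: eq_count => y; exact: in_set.
Qed.

Definition parent_tree n (par : nat -> nat) : rel 'I_n :=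
  fun x y => ((0 < x) && (y == par x :> nat)) || ((0 < y) && (x == par y :> nat)).
Arguments parent_tree : clear implicits.

Section ParentTree.
Variables (n : nat) (par : nat -> nat).
Hypothesis par_lt : forall a, 0 < a -> par a < a.

Local Notation e := (parent_tree n par).

Lemma parent_tree_simple : simple_graph e.
Proof.
split=> [x y|x]; first by rewrite /parent_tree orbC.
rewrite /parent_tree orbb; apply/negP => /andP[x_gt0 /eqP x_eq].
by have := par_lt x_gt0; rewrite -x_eq ltnn.
Qed.

Lemma mem_edges_parent_tree p :
  (p \in edges e) = (0 < p.2) && (p.1 == par p.2 :> nat).
Proof.
rewrite inE /parent_tree; apply/idP/idP.
  case/andP=> lt12 /orP[/andP[p1_gt0 /eqP p2_eq]|//].
  by have := par_lt p1_gt0; rewrite -p2_eq ltnNge (ltnW lt12).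
by case/andP=> p2_gt0 /eqP p1_eq; rewrite p1_eq par_lt //= p2_gt0 eqxx orbT.
Qed.

Lemma deg_parent_tree x :
  deg e x = (0 < x) + count (fun b => (0 < b) && (par b == x)) (iota 0 n).
Proof.
pose to_parent b := (0 < x) && (b == par x).
pose to_child b := (0 < b) && (par b == x).
transitivity (count (predU to_parent to_child) (iota 0 n)).
  rewrite -card_ord_pred; apply: eq_card => y; rewrite !inE /parent_tree /=.
  by rewrite /to_parent /to_child /= [par _ == x]eq_sym.
have no_both : count (predI to_parent to_child) (iota 0 n) = 0.
  apply/eqP; rewrite -leqn0 leqNgt -has_count; apply/hasP => -[b _ /=].
  case/andP=> /andP[x_gt0 /eqP ->] /andP[px_gt0 /eqP x_eq].
  by have := ltn_trans (par_lt px_gt0) (par_lt x_gt0); rewrite x_eq ltnn.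
have := count_predUI to_parent to_child (iota 0 n); rewrite no_both addn0 => ->.
congr (_ + _); rewrite /to_parent; case: (posnP x) => [-> | x_gt0] /=.
  by elim: (iota 0 n).
by rewrite count_uniq_mem ?iota_uniq // mem_iota (ltn_trans (par_lt x_gt0)).
Qed.

Section Rooted.
Hypothesis n_gt0 : 0 < n.
Let root : 'I_n := Ordinal n_gt0.

Lemma neq_root y : (y != root) = (0 < y).
Proof. by rewrite -(inj_eq val_inj) lt0n. Qed.

Lemma parent_tree_connected x y : connect e x y.
Proof.
suff to_root k (z : 'I_n) : z = k :> nat -> connect e z root.
  rewrite (connect_trans (to_root _ x erefl)) //.
  by rewrite (sym_connect_sym parent_tree_simple.1) (to_root _ y erefl).
elim/ltn_ind: k z => k IH z z_eq.
have [z_root|] := eqVneq z root; first by rewrite z_root connect0.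
rewrite neq_root => z_gt0; have pz_lt : par z < n := ltn_trans (par_lt z_gt0) (ltn_ord z).
apply: connect_trans (connect1 (_ : e z (Ordinal pz_lt))) (IH _ _ _ erefl).
  by rewrite /parent_tree z_gt0 eqxx.
by rewrite -z_eq par_lt.
Qed.

Lemma parent_tree_card_edges : #|edges e| = n.-1.
Proof.
rewrite -(card_in_imset (f := snd)) => [|[a b] [c d]]; last first.
  rewrite !mem_edges_parent_tree /= => /andP[_ /eqP a_eq] /andP[_ /eqP c_eq] bd.
  by rewrite -bd in c_eq *; congr (_, _); apply: val_inj; rewrite /= a_eq c_eq.
rewrite (_ : snd @: edges e = [set~ root]) ?cardsC1 ?card_ord //.
apply/setP => y; rewrite !inE neq_root; apply/imsetP/idP => [[p]|y_gt0].
  by rewrite mem_edges_parent_tree => /andP[p2_gt0 _] ->.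
have py_lt : par y < n := ltn_trans (par_lt y_gt0) (ltn_ord y).
by exists (Ordinal py_lt, y); rewrite // mem_edges_parent_tree /= y_gt0 eqxx.
Qed.

Lemma parent_tree_is_tree : is_tree e.
Proof.
split; first exact: parent_tree_simple.
by split; [exact: parent_tree_connected | exact: parent_tree_card_edges].
Qed.

End Rooted.

End ParentTree.

(* Vertex 0 is the centre and the legs are r, r + 4, r + 8, ... for r = 1, ..., 4. *)
Definition spider_parent (a : nat) : nat := if a <= 4 then 0 else a - 4.

Definition spider n : rel 'I_n := parent_tree n spider_parent.
Arguments spider : clear implicits.

Lemma spider_parent_lt a : 0 < a -> spider_parent a < a.
Proof. by rewrite /spider_parent; case: ifP; lia. Qed.

Section Spider.
Variable n : nat.
Hypothesis n_ge9 : 9 <= n.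

Let n_gt0 : 0 < n. Proof. exact: leq_trans n_ge9. Qed.
Let root : 'I_n := Ordinal n_gt0.

Lemma deg_spider_root : deg (spider n) root = 4.
Proof.
rewrite (deg_parent_tree spider_parent_lt) /=.
rewrite -(subnKC (leq_trans _ n_ge9 : 5 <= n)) // iotaD count_cat /=.
rewrite (@eq_in_count _ _ pred0) ?count_pred0 // => b.
by rewrite mem_iota /spider_parent => /andP[b_ge5 _] /=; case: ifP; lia.
Qed.

Lemma deg_spider_nonroot (y : 'I_n) : 0 < y -> deg (spider n) y = 1 + (y + 4 < n).
Proof.
move=> y_gt0; rewrite (deg_parent_tree spider_parent_lt) y_gt0.
rewrite (@eq_count _ _ (pred1 (y + 4))) => [|b]; last first.
  by rewrite /spider_parent /=; case: ifP; lia.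
by rewrite count_uniq_mem ?iota_uniq // mem_iota.
Qed.

Lemma spider_phi_shape : phi_shape (spider n) root.
Proof.
split; first exact: deg_spider_root.
  by move=> y; rewrite neq_root => /deg_spider_nonroot ->; case: (_ < n); [right|left].
move=> y z yz; have [y_root|] := eqVneq y root; first by rewrite y_root deg_spider_root.
rewrite neq_root => y_gt0; rewrite deg_spider_nonroot // => y_leaf.
move: yz; rewrite /spider /parent_tree y_gt0 /spider_parent /=.
have z_lt := ltn_ord z; have y_lt := ltn_ord y.
case: ifP => y_le4; first lia.
move=> /orP[/eqP z_eq|]; last by case: ifP; lia.
rewrite deg_spider_nonroot; lia.
Qed.

Lemma spider_chemical_tree : chemical_tree (spider n).
Proof.
split; first exact: parent_tree_is_tree spider_parent_lt n_gt0.
case: spider_phi_shape => d_root d_other _ y.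
have [->|/d_other] := eqVneq y root; first by rewrite d_root.
by case=> ->.
Qed.

End Spider.

Local Open Scope ring_scope.

Lemma ler_sum_term (R : numDomainType) (I : finType) (P : pred I) (F : I -> R) a :
  (forall i, P i -> 0 <= F i) -> P a -> F a <= \sum_(i | P i) F i.
Proof. by move=> F_ge0 Pa; rewrite (bigD1 a) //= lerDl sumr_ge0 // => i /andP[/F_ge0]. Qed.

Lemma ler_sum_terms2 (R : numDomainType) (I : finType) (F : I -> R) a b :
  (forall i, 0 <= F i) -> a != b -> F a + F b <= \sum_i F i.
Proof.
move=> F_ge0 ab; rewrite (bigD1 a) //= lerD2l.
by apply: (ler_sum_term (P := fun i => i != a)) => //; rewrite eq_sym.
Qed.

Section EdgeIndex.
Variable R : realDomainType.
Variables (f : nat -> nat -> R) (w : nat -> R) (lam mu : R).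

Definition edge_index n (e : rel 'I_n) : R :=
  \sum_(p in edges e) f (deg e p.1) (deg e p.2).

Definition defect (d : nat) : R := d%:R * w d - lam * (d%:R - 2) - mu.

Definition slack (a b : nat) : R := f a b - w a - w b.

Definition excess n (e : rel 'I_n) : R :=
  \sum_v defect (deg e v) + \sum_(p in edges e) slack (deg e p.1) (deg e p.2).

Lemma edge_index_decomp n (e : rel 'I_n) : (0 < n)%N -> is_tree e ->
  edge_index e = mu * n%:R - 2 * lam + excess e.
Proof.
move=> n_gt0 [[e_sym e_irr] [_ e_card]].
have deg_sum : \sum_v ((deg e v)%:R : R) = (n%:R - 1) *+ 2.
  rewrite -natr_sum sum_deg // e_card -mul2n natrM.
  by rewrite -[in RHS](prednK n_gt0) -natr1 mulr2n; ring.
have endpoints : \sum_(p in edges e) (w (deg e p.1) + w (deg e p.2))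
                 = \sum_v (deg e v)%:R * w (deg e v).
  rewrite -(big_adj_edges e_sym e_irr _ (fun x _ => w (deg e x))).
  apply: eq_bigr => x _ /=; rewrite mulr_natl.
  by rewrite (eq_bigl (fun y => y \in [set y | e x y])) ?sumr_const // => y; rewrite inE.
rewrite /edge_index (eq_bigr (fun p => w (deg e p.1) + w (deg e p.2)
                                      + slack (deg e p.1) (deg e p.2))) => [|p _]; last first.
  by rewrite /slack; ring.
rewrite big_split /= endpoints.
rewrite (eq_bigr (fun v => defect (deg e v) + lam * (deg e v)%:R + (mu - 2 * lam)))
  => [|v _]; last by rewrite /defect; ring.
rewrite /excess big_split big_split /= -mulr_sumr deg_sum sumr_const card_ord.
by rewrite -[_ *+ n]mulr_natr; ring.
Qed.

(* Dual certificate: it makes the spiders of Phi(n) the minimisers of the edge index. *)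
Record certificate : Prop := Certificate {
  cert_sym : forall a b, f a b = f b a;
  defect1 : defect 1 = 0;
  defect2 : defect 2 = 0;
  defect_gt0 : forall d, (d <= 4)%N -> d != 1%N -> d != 2%N -> 0 < defect d;
  slack12 : slack 1 2 = 0;
  slack22 : slack 2 2 = 0;
  slack24 : slack 2 4 = 0;
  slack_ge0 : forall a b, (0 < a <= 4)%N -> (0 < b <= 4)%N ->
    (a, b) != (1, 1)%N -> (a, b) != (4, 4)%N -> 0 <= slack a b;
  slack14_gt0 : 0 < slack 1 4;
  slack44_le0 : slack 4 4 <= 0;
  defect4_slack44 : 0 < defect 4 + 4 * slack 4 4 }.

Hypothesis C : certificate.

Lemma slackC a b : slack a b = slack b a.
Proof. by rewrite /slack (cert_sym C); ring. Qed.

Lemma defect_ge0 d : (d <= 4)%N -> 0 <= defect d.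
Proof.
move=> d_le4; have [->|d1] := eqVneq d 1%N; first by rewrite (defect1 C).
have [->|d2] := eqVneq d 2%N; first by rewrite (defect2 C).
by rewrite ltW // (defect_gt0 C).
Qed.

Lemma defect_le0 d : (d <= 4)%N -> defect d <= 0 -> d = 1%N \/ d = 2%N.
Proof.
move=> d_le4; have [->|d1] := eqVneq d 1%N; first by left.
have [->|d2] := eqVneq d 2%N; first by right.
by rewrite leNgt (defect_gt0 C).
Qed.

Section ChemicalTree.
Variables (n : nat) (e : rel 'I_n).
Hypotheses (e_chem : chemical_tree e) (n_gt2 : (2 < n)%N).

Let e_sym : symmetric e. Proof. by case: e_chem => -[[]]. Qed.
Let e_irr : irreflexive e. Proof. by case: e_chem => -[[]]. Qed.
Let e_conn : forall x y, connect e x y. Proof. by case: e_chem => -[_ []]. Qed.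
Let deg_le4 x : (deg e x <= 4)%N. Proof. by case: e_chem. Qed.

Lemma edge_slack_ge0 p : p \in edges e -> (deg e p.1, deg e p.2) != (4, 4)%N ->
  0 <= slack (deg e p.1) (deg e p.2).
Proof.
case: p => x y; rewrite inE /= => /andP[_ xy] not44.
have yx : e y x by rewrite e_sym.
apply: (slack_ge0 C) => //; rewrite ?(deg_gt0 xy) ?(deg_gt0 yx) ?deg_le4 //.
rewrite xpair_eqE negb_and; have [dx|//] := eqVneq (deg e x) 1%N.
by rewrite (leaf_nbr_not_leaf e_sym e_conn n_gt2 xy dx) orbT.
Qed.

Lemma excess_phi_shape x : phi_shape e x -> excess e = defect 4.
Proof.
move=> e_phi; have [dx deg12 leaf_adj] := e_phi.
rewrite /excess (bigD1 x) //= dx big1 => [|y yx]; last first.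
  by case: (deg12 y yx) => ->; rewrite ?(defect1 C) ?(defect2 C).
rewrite big1 ?addr0 // => -[y z]; rewrite inE /= => /andP[_ yz].
have zy : e z y by rewrite e_sym.
have [dy|dy1] := eqVneq (deg e y) 1%N; first by rewrite dy (leaf_adj y z yz dy) (slack12 C).
have [dz|dz1] := eqVneq (deg e z) 1%N.
  by rewrite dz (leaf_adj z y zy dz) slackC (slack12 C).
case: (phi_deg e_phi y) (phi_deg e_phi z) yz dy1 dz1 => [->|->|->] [->|->|->] //.
- by rewrite e_irr.
- by rewrite dx slackC (slack24 C).
- by rewrite dx (slack24 C).
- by rewrite (slack22 C).
Qed.

Lemma excess_two_hubs x y : x != y -> deg e x = 4%N -> deg e y = 4%N ->
  defect 4 < excess e.
Proof.
(* Each hub lies on at most four 44-edges, so the hub defects pay for the 44-slacks. *)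
move=> xy dx dy; set h := defect 4; set s := slack 4 4.
pose N4 : R := (nverts e 4)%:R; pose M : R := (medges e 4 4)%:R.
have defect_sum_ge : h * N4 <= \sum_v defect (deg e v).
  rewrite /N4 nverts_sum natr_sum mulr_sumr; apply: ler_sum => v _.
  by have [->|_] := eqVneq (deg e v) 4%N; rewrite ?mulr1 ?mulr0 ?defect_ge0.
have slack_sum_ge : s * M <= \sum_(p in edges e) slack (deg e p.1) (deg e p.2).
  rewrite /M /medges card_edges_cond natr_sum mulr_sumr; apply: ler_sum => p pe.
  rewrite orbb -xpair_eqE; have [[-> ->]|not44] := eqVneq (deg e p.1, deg e p.2) (4, 4)%N.
    by rewrite mulr1.
  by rewrite mulr0 edge_slack_ge0.
have M_le : 2 * M <= 4 * N4.
  rewrite -!natrM ler_nat mul2n.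
  by rewrite (medges_adj_pairs_diag e_sym e_irr) adj_pairs_le.
have N4_ge2 : 2 <= N4.
  by rewrite ler_nat; apply/card_gt1P; exists x, y; rewrite !inE dx dy.
have := slack44_le0 C; have := defect4_slack44 C; rewrite -/h -/s => hs_gt0 s_le0.
have : 0 <= - s * (4 * N4 - 2 * M) by apply: mulr_ge0; lra.
have : 0 <= (N4 - 2) * (h + 2 * s) by apply: mulr_ge0; lra.
rewrite /excess; nra.
Qed.

Lemma excess_le_phi_shape x : deg e x = 4%N -> (forall y, deg e y = 4%N -> y = x) ->
  excess e <= defect 4 -> phi_shape e x.
Proof.
move=> dx hub_unique; rewrite /excess.
set D := \sum_v _; set S := \sum_(p in edges e) _ => excess_le.
have slack_terms_ge0 p : p \in edges e -> 0 <= slack (deg e p.1) (deg e p.2).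
  move=> pe; apply: edge_slack_ge0 => //.
  apply: contraTneq pe => -[/hub_unique p1x /hub_unique p2x].
  by rewrite inE p1x p2x e_irr andbF.
have D_ge : defect 4 <= D by rewrite -dx; apply: ler_sum_term => // v _; apply: defect_ge0.
have S_ge0 : 0 <= S by apply: sumr_ge0.
have S_le0 : S <= 0 by lra.
have deg12 y : y != x -> deg e y = 1%N \/ deg e y = 2%N.
  move=> yx; apply: defect_le0 => //.
  have := ler_sum_terms2 (fun v => defect_ge0 (deg_le4 v)) (yx : y != x).
  rewrite dx -/D; lra.
split=> // y z yz dy.
have slack_le : slack 1 (deg e z) <= S.
  rewrite -dy; case/orP: (adj_edge e_sym e_irr yz) => pe; last rewrite slackC.
    exact: (ler_sum_term (F := fun p => slack (deg e p.1) (deg e p.2))) pe.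
  exact: (ler_sum_term (F := fun p => slack (deg e p.1) (deg e p.2))) pe.
have [zx|zx] := eqVneq z x.
  by move: (le_trans slack_le S_le0); rewrite zx dx leNgt (slack14_gt0 C).
case: (deg12 z zx) => // dz.
by move: (leaf_nbr_not_leaf e_sym e_conn n_gt2 yz dy); rewrite dz.
Qed.

Lemma excess_gt : (exists x, deg e x = 4%N) -> (forall x, ~ phi_shape e x) ->
  defect 4 < excess e.
Proof.
move=> [x dx] not_phi.
case: (boolP [exists y, (y != x) && (deg e y == 4%N)]) => [/existsP[y /andP[yx /eqP dy]]|].
  by apply: (excess_two_hubs (x := x) (y := y)); rewrite // eq_sym.
rewrite negb_exists => /forallP hub_unique; rewrite ltNge; apply/negP => excess_le.
apply: (not_phi x); apply: excess_le_phi_shape dx _ excess_le => y dy.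
by apply/eqP; move: (hub_unique y); rewrite dy eqxx andbT negbK.
Qed.

End ChemicalTree.

Lemma edge_index_lt_phi_shape n (e e' : rel 'I_n) x' : (2 < n)%N ->
  chemical_tree e' -> phi_shape e' x' ->
  chemical_tree e -> (exists x, deg e x = 4%N) -> (forall x, ~ phi_shape e x) ->
  edge_index e' < edge_index e.
Proof.
move=> n_gt2 e'_chem e'_phi e_chem e_hub not_phi.
have n_gt0 : (0 < n)%N by apply: ltn_trans n_gt2.
rewrite !edge_index_decomp //; [|by case: e_chem | by case: e'_chem].
by rewrite (excess_phi_shape e'_chem e'_phi) ltrD2l excess_gt.
Qed.

End EdgeIndex.

Section Potential.
Variables (R : realFieldType) (f : nat -> nat -> R) (t : R).

(* Vanishing slacks on the edge types 12, 22, 24 force w on degrees 1, 2, 4, and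
   defect 1 = defect 2 = 0 then force lam and mu; only the value t at degree 3 is free. *)
Definition potential (d : nat) : R :=
  match d with
  | 1 => f 1 2 - f 2 2 / 2
  | 2 => f 2 2 / 2
  | 3 => t
  | 4 => f 2 4 - f 2 2 / 2
  | _ => 0
  end.

Let lam := f 2 2 - potential 1.
Let mu := f 2 2.
Local Notation H := (defect potential lam mu).
Local Notation s := (slack f potential).

Hypotheses (f_sym : forall a b, f a b = f b a)
  (H0_gt0 : 0 < H 0) (H3_gt0 : 0 < H 3) (H4_gt0 : 0 < H 4)
  (s13_ge0 : 0 <= s 1 3) (s23_ge0 : 0 <= s 2 3) (s33_ge0 : 0 <= s 3 3) (s34_ge0 : 0 <= s 3 4)
  (s14_gt0 : 0 < s 1 4) (s44_le0 : s 4 4 <= 0) (H4_s44 : 0 < H 4 + 4 * s 4 4).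

Lemma potential_certificate : certificate f potential lam mu.
Proof.
have sC a b : s a b = s b a by rewrite /slack f_sym; ring.
have s12 : s 1 2 = 0 by rewrite /slack /=; ring.
have s22 : s 2 2 = 0 by rewrite /slack /=; field.
have s24 : s 2 4 = 0 by rewrite /slack /=; ring.
split=> //; try by rewrite /defect /lam /mu /=; field.
  by case=> [|[|[|[|[|d]]]]].
move=> a b /andP[a_gt0 a_le4] /andP[b_gt0 b_le4].
case: a a_gt0 a_le4 => [|[|[|[|[|a]]]]] //; case: b b_gt0 b_le4 => [|[|[|[|[|b]]]]] // *;
  rewrite ?[s 2 1]sC ?[s 3 1]sC ?[s 4 1]sC ?[s 3 2]sC ?[s 4 2]sC ?[s 4 3]sC ?s12 ?s22 ?s24 //;
  exact: ltW.
Qed.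

End Potential.

Lemma sqrt_bounds (R : rcfType) (c lo hi : R) : 0 <= lo -> 0 <= hi ->
  lo ^+ 2 <= c <= hi ^+ 2 -> lo <= Num.sqrt c <= hi.
Proof.
move=> lo_ge0 hi_ge0 /andP[lo_c c_hi]; have c_ge0 := le_trans (sqr_ge0 lo) lo_c.
by rewrite -(ger0_norm lo_ge0) -(ger0_norm hi_ge0) -!sqrtr_sqr !ler_sqrt ?sqr_ge0 ?lo_c.
Qed.

Definition sombor_weight (R : rcfType) (a b : nat) : R :=
  Num.sqrt (a%:R ^+ 2 + b%:R ^+ 2).

Definition red_sombor_weight (R : rcfType) (a b : nat) : R :=
  Num.sqrt ((a%:R - 1) ^+ 2 + (b%:R - 1) ^+ 2).

Lemma sombor_certificate (R : rcfType) :
  exists w lam mu, certificate (@sombor_weight R) w lam mu.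
Proof.
have b12 : 38/17 <= sombor_weight R 1 2 <= 161/72 by apply: sqrt_bounds; lra.
have b13 : 117/37 <= sombor_weight R 1 3 <= 136/43 by apply: sqrt_bounds; lra.
have b14 : 235/57 <= sombor_weight R 1 4 <= 33/8 by apply: sqrt_bounds; lra.
have b22 : 280/99 <= sombor_weight R 2 2 <= 99/35 by apply: sqrt_bounds; lra.
have b23 : 137/38 <= sombor_weight R 2 3 <= 119/33 by apply: sqrt_bounds; lra.
have b24 : 76/17 <= sombor_weight R 2 4 <= 161/36 by apply: sqrt_bounds; lra.
have b33 : 420/99 <= sombor_weight R 3 3 <= 297/70 by apply: sqrt_bounds; lra.
have b34 : 5 <= sombor_weight R 3 4 <= 5 by apply: sqrt_bounds; lra.
have b44 : 560/99 <= sombor_weight R 4 4 <= 198/35 by apply: sqrt_bounds; lra.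
do 3 eexists; apply: (potential_certificate (t := 19/10));
  rewrite /defect /slack /=; try lra.
by move=> a b; rewrite /sombor_weight addrC.
Qed.

Lemma red_sombor_certificate (R : rcfType) :
  exists w lam mu, certificate (@red_sombor_weight R) w lam mu.
Proof.
have b12 : 1 <= red_sombor_weight R 1 2 <= 1 by apply: sqrt_bounds; lra.
have b13 : 2 <= red_sombor_weight R 1 3 <= 2 by apply: sqrt_bounds; lra.
have b14 : 3 <= red_sombor_weight R 1 4 <= 3 by apply: sqrt_bounds; lra.
have b22 : 140/99 <= red_sombor_weight R 2 2 <= 99/70 by apply: sqrt_bounds; lra.
have b23 : 38/17 <= red_sombor_weight R 2 3 <= 161/72 by apply: sqrt_bounds; lra.
have b24 : 117/37 <= red_sombor_weight R 2 4 <= 136/43 by apply: sqrt_bounds; lra.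
have b33 : 280/99 <= red_sombor_weight R 3 3 <= 99/35 by apply: sqrt_bounds; lra.
have b34 : 137/38 <= red_sombor_weight R 3 4 <= 119/33 by apply: sqrt_bounds; lra.
have b44 : 420/99 <= red_sombor_weight R 4 4 <= 297/70 by apply: sqrt_bounds; lra.
do 3 eexists; apply: (potential_certificate (t := 11/10));
  rewrite /defect /slack /=; try lra.
by move=> a b; rewrite /red_sombor_weight addrC.
Qed.

Lemma SO_edge_index (R : rcfType) n (e : rel 'I_n) :
  SO R e = edge_index (@sombor_weight R) e.
Proof. by []. Qed.

Lemma SOred_edge_index (R : rcfType) n (e : rel 'I_n) :
  SOred R e = edge_index (@red_sombor_weight R) e.
Proof. by []. Qed.

Lemma max_deg_attained n (e : rel 'I_n) : (0 < n)%N -> exists x, deg e x = max_deg e.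
Proof.
move=> n_gt0; rewrite /max_deg (eq_bigl (fun i : 'I_n => i \in 'I_n)) //.
have [|x _ ->] := eq_bigmax_cond (deg e) (A := 'I_n); last by exists x.
by rewrite card_ord.
Qed.

Theorem theorem3p1 (R : rcfType) (n : nat) (Tstar : rel 'I_n) :
  (9 <= n)%N ->
  chemical_tree Tstar ->
  max_deg Tstar = 4%N ->
  ~ inPhi Tstar ->
  exists T : rel 'I_n,
    inPhi T /\ SO R T < SO R Tstar /\ SOred R T < SOred R Tstar.
Proof.
move=> n_ge9 Tstar_chem Tstar_max4 Tstar_notin.
have n_gt2 : (2 < n)%N by exact: leq_trans n_ge9.
have Tstar_hub : exists x, deg Tstar x = 4%N.
  by rewrite -Tstar_max4; apply: max_deg_attained; exact: leq_trans n_gt2.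
have Tstar_not_phi x : ~ phi_shape Tstar x.
  by move=> phi; apply: Tstar_notin; apply: phi_shape_inPhi Tstar_chem phi.
have spider_chem := spider_chemical_tree n_ge9.
have spider_phi := spider_phi_shape n_ge9.
exists (spider n); split; first exact: phi_shape_inPhi spider_chem spider_phi.
have [w1 [lam1 [mu1 C1]]] := sombor_certificate R.
have [w2 [lam2 [mu2 C2]]] := red_sombor_certificate R.
rewrite !SO_edge_index !SOred_edge_index.
by split; [move: C1 | move: C2] => C;
  apply: (edge_index_lt_phi_shape C n_gt2 spider_chem spider_phi Tstar_chem Tstar_hub).
Qed.
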